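(* For any distinct $f_0,f_1\in\Delta(\mathcal{G})$ there exists a vertex-transitive graph $G$ such that $f_0(G)\neq f_1(G)$.
   Context: $\mathcal{G}$ is the class of finite simple graphs. $E_n$ is the graph with $n$ vertices and no edges; $\sqcup$ is disjoint union; $\boxtimes$ is the strong product (vertex set $V(G)\times V(H)$, distinct $(g,h),(g',h')$ adjacent iff ($g=g'$ or $gg'\in E(G)$) and ($h=h'$ or $hh'\in E(H)$)). A cohomomorphism $G\to H$ is a map $V(G)\to V(H)$ sending distinct non-adjacent vertices to distinct non-adjacent vertices; $G\le_{\mathcal{G}}H$ if one exists. $\Delta(\mathcal{G})$ is the set of functions $f:\mathcal{G}\to\mathbb{R}_{\ge0}$ with $f(E_n)=n$, $f(G\boxtimes H)=f(G)f(H)$, $f(G\sqcup H)=f(G)+f(H)$, and $f(G)\le f(H)$ whenever $G\le_{\mathcal{G}}H$. *)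

From HB Require Import structures.
From mathcomp Require Import all_boot all_order all_algebra.
From mathcomp Require Import reals.
Set Implicit Arguments. Unset Strict Implicit. Unset Printing Implicit Defensive.
Import Order.TTheory GRing.Theory Num.Theory.
Local Open Scope ring_scope.

Record graph := Graph {
  gV :> finType;
  gadj : rel gV;
  gadj_sym : symmetric gadj;
  gadj_irr : irreflexive gadj }.

Definition E_graph (n : nat) : graph :=
  @Graph 'I_n (fun _ _ => false) (fun _ _ => erefl) (fun _ => erefl).

Definition dunion_adj (G H : graph) : rel (G + H)%type :=
  fun u v => match u, v with
             | inl a, inl b => gadj a b
             | inr a, inr b => gadj a b
             | _, _ => false end.

Lemma dunion_sym (G H : graph) : symmetric (@dunion_adj G H).
Proof. by case=> a [] b //=; rewrite gadj_sym. Qed.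

Lemma dunion_irr (G H : graph) : irreflexive (@dunion_adj G H).
Proof. by case=> a /=; rewrite gadj_irr. Qed.

Definition dunion (G H : graph) : graph :=
  @Graph (G + H)%type (@dunion_adj G H) (@dunion_sym G H) (@dunion_irr G H).

Definition sprod_adj (G H : graph) : rel (G * H)%type :=
  fun u v => [&& u != v, (u.1 == v.1) || gadj u.1 v.1
                       & (u.2 == v.2) || gadj u.2 v.2].

Lemma sprod_sym (G H : graph) : symmetric (@sprod_adj G H).
Proof.
by move=> u v; rewrite /sprod_adj eq_sym [u.1 == _]eq_sym [u.2 == _]eq_sym
  [gadj u.1 _]gadj_sym [gadj u.2 _]gadj_sym.
Qed.

Lemma sprod_irr (G H : graph) : irreflexive (@sprod_adj G H).
Proof. by move=> u; rewrite /sprod_adj eqxx. Qed.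

Definition sprod (G H : graph) : graph :=
  @Graph (G * H)%type (@sprod_adj G H) (@sprod_sym G H) (@sprod_irr G H).

Definition cohom (G H : graph) (phi : G -> H) : Prop :=
  forall x y : G, x != y -> ~~ gadj x y ->
    (phi x != phi y) && ~~ gadj (phi x) (phi y).

Definition coh_le (G H : graph) : Prop := exists phi : G -> H, cohom phi.

Definition in_Delta (R : realType) (f : graph -> R) : Prop :=
  [/\ forall G, 0 <= f G,
      forall n : nat, f (E_graph n) = n%:R,
      forall G H, f (sprod G H) = f G * f H,
      forall G H, f (dunion G H) = f G + f H
    & forall G H, coh_le G H -> f G <= f H].

Definition is_aut (G : graph) (s : G -> G) : Prop :=
  bijective s /\ forall x y : G, gadj (s x) (s y) = gadj x y.

Definition vertex_transitive (G : graph) : Prop :=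
  forall x y : G, exists s : G -> G, is_aut s /\ s x = y.

(* If f0 and f1 agree on vertex-transitive graphs then f0 = f1.  Split the
   N-th strong power of H into type classes: sets of tuples with the same
   multiset of entries.  Coordinate permutations act transitively on each
   class, so each induced class is vertex-transitive and f0, f1 agree on it;
   there are at most (N+1)^|H| classes, each a subgraph of the power, and
   the power maps cohomomorphically into their disjoint union plus one point.
   Hence f0(H)^N <= (N+1)^|H| f1(H)^N + 1, and taking N-th roots gives
   f0(H) <= f1(H) whenever f1(H) >= 1; apply this to H + E_1 both ways. *)

From mathcomp Require Import all_boot all_order all_algebra fingroup perm.
From mathcomp Require Import reals lra.
From Stdlib Require Import Classical FunctionalExtensionality.
Set Implicit Arguments. Unset Strict Implicit. Unset Printing Implicit Defensive.
Import Order.TTheory GRing.Theory Num.Theory.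
Local Open Scope ring_scope.

Section GeometricGrowth.
Variable R : archiRealFieldType.

Lemma bernoulli_ineq (e : R) (M : nat) : 0 <= e -> 1 + M%:R * e <= (1 + e) ^+ M.
Proof.
move=> e0; elim: M => [|M IH]; first by rewrite mul0r addr0 expr0.
have Me0 : 0 <= M%:R * e by rewrite mulr_ge0.
have ep0 : 0 <= (1 + e) ^+ M by rewrite exprn_ge0 // addr_ge0.
rewrite exprS -natr1; nra.
Qed.

Lemma poly_lt_expr (r c : R) (k : nat) :
  1 < r -> exists N, c * N.+1%:R ^+ k < r ^+ N.
Proof.
move=> r1; have {r1} [e e0 ->] : exists2 e : R, 0 < e & r = 1 + e.
  by exists (r - 1); rewrite ?subr_gt0 // addrC subrK.
have ek0 : 0 < e ^+ k.+1 := exprn_gt0 _ e0.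
pose M := (Num.bound (`|c| * k.+2%:R ^+ k / e ^+ k.+1)).+1.
have M1 : 1 <= M%:R :> R by rewrite ler1n.
have Mk0 : 0 < M%:R ^+ k :> R by rewrite exprn_gt0 //; lra.
have large_M : `|c| * k.+2%:R ^+ k < M%:R * e ^+ k.+1.
  rewrite -ltr_pdivrMr //; apply: lt_le_trans (archi_boundP _) _.
    by rewrite divr_ge0 ?mulr_ge0 ?exprn_ge0 // ltW.
  by rewrite /M ler_nat.
have Me_le : M%:R * e <= (1 + e) ^+ M by have := bernoulli_ineq M (ltW e0); lra.
exists (M * k.+1)%N.
have poly_le : c * (M * k.+1).+1%:R ^+ k <= M%:R ^+ k * (`|c| * k.+2%:R ^+ k).
  rewrite mulrCA -exprMn -natrM.
  apply: le_trans (_ : `|c| * _ <= _).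
    by apply/ler_wpM2r/ler_norm; rewrite exprn_ge0.
  apply/ler_wpM2l/lerXn2r; rewrite ?nnegrE // ler_nat.
  by rewrite ltn_pmul2l.
apply: le_lt_trans poly_le _; rewrite exprM.
apply: lt_le_trans (_ : (M%:R * e) ^+ k.+1 <= _).
  by rewrite exprMn exprSr -mulrA ltr_pM2l.
have e_ge0 := ltW e0.
apply: lerXn2r Me_le; rewrite nnegrE; first by rewrite mulr_ge0.
by rewrite exprn_ge0 // addr_ge0.
Qed.

Lemma le_of_expr_le_poly (a b c : R) (k : nat) : 0 <= a -> 0 <= b ->
  (forall N, a ^+ N <= c * N.+1%:R ^+ k * b ^+ N) -> a <= b.
Proof.
move=> a0 b0 hab; rewrite leNgt; apply/negP => ba.
have [b_eq0|b_gt0] := eqVneq b 0.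
  by have := hab 1%N; rewrite b_eq0 !expr1 mulr0; lra.
have {b_gt0} b_gt0 : 0 < b by rewrite lt_def b_gt0.
have [N hN] : exists N, c * N.+1%:R ^+ k < (a / b) ^+ N.
  by apply: poly_lt_expr; rewrite ltr_pdivlMr // mul1r.
have := hab N; rewrite leNgt => /negP; apply.
by rewrite -(divfK (lt0r_neq0 b_gt0) a) exprMn ltr_pM2r // exprn_gt0.
Qed.

End GeometricGrowth.

Lemma cohom_of_inj (G H : graph) (phi : G -> H) : injective phi ->
  (forall x y, gadj (phi x) (phi y) -> gadj x y) -> cohom phi.
Proof.
move=> phi_inj phi_refl x y nxy nadj; rewrite (inj_eq phi_inj) nxy /=.
by apply: contra nadj; apply: phi_refl.
Qed.

Section Spectrum.
Variables (R : realType) (f : graph -> R).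
Hypothesis f_Delta : in_Delta f.

Lemma Delta_ge0 G : 0 <= f G. Proof. by case: f_Delta. Qed.
Lemma Delta_E n : f (E_graph n) = n%:R. Proof. by case: f_Delta. Qed.
Lemma Delta_sprod G H : f (sprod G H) = f G * f H. Proof. by case: f_Delta. Qed.
Lemma Delta_dunion G H : f (dunion G H) = f G + f H. Proof. by case: f_Delta. Qed.
Lemma Delta_mono G H : coh_le G H -> f G <= f H.
Proof. by case: f_Delta => _ _ _ _; apply. Qed.

Lemma Delta_iso (G H : graph) (phi : G -> H) (psi : H -> G) :
  cancel phi psi -> cancel psi phi ->
  (forall x y, gadj (phi x) (phi y) = gadj x y) -> f G = f H.
Proof.
move=> phiK psiK phi_adj; apply/le_anti/andP; split; apply: Delta_mono.
  by exists phi; apply: cohom_of_inj (can_inj phiK) _ => x y; rewrite phi_adj.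
by exists psi; apply: cohom_of_inj (can_inj psiK) _ => x y; rewrite -phi_adj !psiK.
Qed.

End Spectrum.

Definition adjeq (G : graph) (a b : G) := (a == b) || gadj a b.

Lemma adjeqC (G : graph) (a b : G) : adjeq a b = adjeq b a.
Proof. by rewrite /adjeq eq_sym gadj_sym. Qed.

Lemma adjeqxx (G : graph) (a : G) : adjeq a a.
Proof. by rewrite /adjeq eqxx. Qed.

Section StrongPower.
Variable H : graph.

Definition adjeq_tuple N (u w : N.-tuple H) := [forall i, adjeq (tnth u i) (tnth w i)].

Lemma adjeq_tupleC N (u w : N.-tuple H) : adjeq_tuple u w = adjeq_tuple w u.
Proof. by apply/forallP/forallP => h i; rewrite adjeqC. Qed.

Lemma adjeq_tuplexx N (u : N.-tuple H) : adjeq_tuple u u.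
Proof. by apply/forallP => i; apply: adjeqxx. Qed.

Lemma adjeq_tuple_cons N (a b : H) (u w : N.-tuple H) :
  adjeq_tuple [tuple of a :: u] [tuple of b :: w] = adjeq a b && adjeq_tuple u w.
Proof.
apply/forallP/andP => [h|[hab /forallP huw] i].
  split; first by have := h ord0; rewrite !tnth0.
  by apply/forallP => i; have := h (lift ord0 i); rewrite !tnthS.
by case: (unliftP ord0 i) => [j ->|->]; rewrite ?tnthS ?tnth0.
Qed.

Definition spow_adj N : rel (N.-tuple H) := fun u w => (u != w) && adjeq_tuple u w.

Lemma spow_adj_sym N : symmetric (@spow_adj N).
Proof. by move=> u w; rewrite /spow_adj eq_sym adjeq_tupleC. Qed.

Lemma spow_adj_irr N : irreflexive (@spow_adj N).
Proof. by move=> u; rewrite /spow_adj eqxx. Qed.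

Definition spow N : graph := @Graph _ _ (@spow_adj_sym N) (@spow_adj_irr N).

Lemma spow_adj_cons N (a b : H) (u w : N.-tuple H) :
  gadj ([tuple of a :: u] : spow N.+1) [tuple of b :: w] =
  gadj ((a, u) : sprod H (spow N)) (b, w).
Proof.
rewrite /= /spow_adj /sprod_adj /= adjeq_tuple_cons -!val_eqE /= eqseq_cons xpair_eqE.
rewrite -/(adjeq a b); case: (eqVneq u w) => [->|neq_uw] /=.
  by rewrite adjeq_tuplexx eqxx !andbT.
by rewrite val_eqE (negbTE neq_uw) /spow_adj neq_uw.
Qed.

Section Delta.
Variables (R : realType) (f : graph -> R).
Hypothesis f_Delta : in_Delta f.

Lemma Delta_spow N : f (spow N) = f H ^+ N.
Proof.
elim: N => [|N IH].
  have -> : f H ^+ 0 = f (E_graph 1) by rewrite Delta_E.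
  apply: (Delta_iso f_Delta (phi := fun _ : spow 0 => ord0 : E_graph 1)
                            (psi := fun _ => [tuple])).
  - by move=> u; rewrite [RHS]tuple0.
  - by move=> i; rewrite [RHS]ord1.
  - by move=> u w; rewrite (tuple0 u) (tuple0 w) /= /spow_adj eqxx.
rewrite exprS -IH -Delta_sprod //; apply/esym.
apply: (Delta_iso f_Delta
  (phi := fun x : sprod H (spow N) => [tuple of x.1 :: x.2] : spow N.+1)
  (psi := fun u : spow N.+1 => (thead u, [tuple of behead u]) : sprod H (spow N))).
- by case=> a u; congr pair; apply: val_inj.
- by move=> u; rewrite [in RHS](tuple_eta u).
- by case=> a u [b w]; rewrite spow_adj_cons.
Qed.

End Delta.
End StrongPower.

Section Induced.
Variables (G : graph) (P : pred G).

Definition induced_adj : rel {x | P x} := fun x y => gadj (val x) (val y).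

Lemma induced_adj_sym : symmetric induced_adj.
Proof. by move=> x y; apply: gadj_sym. Qed.

Lemma induced_adj_irr : irreflexive induced_adj.
Proof. by move=> x; apply: gadj_irr. Qed.

Definition induced : graph := @Graph _ _ induced_adj_sym induced_adj_irr.

Lemma induced_coh_le : coh_le induced G.
Proof. by exists val; apply: cohom_of_inj; first exact: val_inj. Qed.

Lemma induced_vertex_transitive :
  (forall x y, P x -> P y ->
     exists2 s : G -> G, is_aut s & (forall z, P (s z) = P z) /\ s x = y) ->
  vertex_transitive induced.
Proof.
move=> trans x y; have [s [[g sK gK] s_adj] [sP sxy]] := trans _ _ (valP x) (valP y).
have gP z : P (g z) = P z by rewrite -sP gK.
pose s' (z : induced) : induced := exist _ (s (val z)) (etrans (sP _) (valP z)).
pose g' (z : induced) : induced := exist _ (g (val z)) (etrans (gP _) (valP z)).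
exists s'; split; last exact: val_inj.
split; last by move=> a b; apply: s_adj.
by exists g' => z; apply: val_inj; rewrite /= ?sK ?gK.
Qed.

End Induced.

Section TypeClasses.
Variables (H : graph) (N : nat).

Definition perm_tuple (p : 'S_N) (u : N.-tuple H) : N.-tuple H :=
  [tuple tnth u (p i) | i < N].

Lemma perm_tupleK p : cancel (perm_tuple p) (perm_tuple (p^-1)%g).
Proof. by move=> u; apply: eq_from_tnth => i; rewrite !tnth_mktuple permKV. Qed.

Lemma perm_tupleKV p : cancel (perm_tuple (p^-1)%g) (perm_tuple p).
Proof. by move=> u; apply: eq_from_tnth => i; rewrite !tnth_mktuple permK. Qed.

Lemma perm_tuple_aut p : is_aut (perm_tuple p : spow H N -> spow H N).
Proof.
split.
  by exists (perm_tuple (p^-1)%g); [apply: perm_tupleK | apply: perm_tupleKV].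
move=> u w; rewrite /= /spow_adj (can_eq (perm_tupleK p)); congr andb.
apply/forallP/forallP => adj_uw i; last by rewrite !tnth_mktuple.
by have := adj_uw ((p^-1)%g i); rewrite !tnth_mktuple permKV.
Qed.

Definition ttype (u : N.-tuple H) : {ffun H -> 'I_N.+1} :=
  [ffun v => inord (count_mem v u)].

Lemma ttypeE u v : ttype u v = count_mem v u :> nat.
Proof. by rewrite ffunE inordK // ltnS -[X in (_ <= X)%N](size_tuple u) count_size. Qed.

Lemma eq_ttype u w : (ttype u == ttype w) = perm_eq u w.
Proof.
apply/eqP/idP => [eq_uw | /seq.permP eq_uw].
  by apply/allP => v _; rewrite /= -!ttypeE eq_uw.
by apply/ffunP => v; apply: val_inj; rewrite /= !ttypeE.
Qed.

Definition type_class (t : {ffun H -> 'I_N.+1}) : graph :=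
  induced (fun u : spow H N => ttype u == t).

Lemma type_class_vertex_transitive t : vertex_transitive (type_class t).
Proof.
apply: induced_vertex_transitive => u w /eqP tu /eqP tw.
have /tuple_permP[p /val_inj ->] : perm_eq w u by rewrite -eq_ttype tu tw.
exists (perm_tuple p); first exact: perm_tuple_aut.
split=> // z; congr (_ == t); apply/eqP; rewrite eq_ttype.
by apply/tuple_permP; exists p.
Qed.

End TypeClasses.

Section TypeDecomposition.
Variables (H : graph) (N : nat).

Local Notation tuple_type := {ffun H -> 'I_N.+1}.

(* The final [E_graph 1] is a junk target that makes [to_type_classes]
   total on tuples whose type is not listed. *)
Fixpoint type_classes (l : seq tuple_type) : graph :=
  if l is t :: l' then dunion (type_class t) (type_classes l') else E_graph 1.

Fixpoint to_type_classes (l : seq tuple_type) (u : spow H N) : type_classes l :=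
  match l return type_classes l with
  | [::] => ord0
  | t :: l' => if insub u is Some x then inl x else inr (to_type_classes l' u)
  end.

Lemma to_type_classes_cohom (l : seq tuple_type) (u w : spow H N) :
  ttype u \in l -> ttype w \in l ->
  u != w -> ~~ gadj u w ->
  let phi := to_type_classes l in (phi u != phi w) && ~~ gadj (phi u) (phi w).
Proof.
elim: l => [//|t l IH] /=; rewrite !inE => u_l w_l neq_uw nadj_uw.
case: insubP => [x _ xu|u_t]; case: insubP => [y _ yw|w_t] //=.
  rewrite /induced_adj xu yw nadj_uw andbT.
  by apply: contra neq_uw => /eqP[xy]; rewrite -xu -yw xy.
apply: IH => //.
  by case/orP: u_l => // /eqP ut; rewrite ut eqxx in u_t.
by case/orP: w_l => // /eqP wt; rewrite wt eqxx in w_t.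
Qed.

Lemma spow_coh_le_type_classes : coh_le (spow H N) (type_classes (enum {: tuple_type})).
Proof.
exists (to_type_classes (enum {: tuple_type})) => u w.
by apply: to_type_classes_cohom; rewrite mem_enum.
Qed.

Lemma Delta_type_classes (R : realType) (f : graph -> R) l : in_Delta f ->
  f (type_classes l) = \sum_(t <- l) f (type_class t) + 1.
Proof.
move=> f_Delta; elim: l => [|t l IH] /=; first by rewrite big_nil Delta_E // add0r.
by rewrite big_cons Delta_dunion // IH addrA.
Qed.

End TypeDecomposition.

Section Agreement.
Variables (R : realType) (f0 f1 : graph -> R).
Hypotheses (f0_Delta : in_Delta f0) (f1_Delta : in_Delta f1).
Hypothesis agree_vt : forall G, vertex_transitive G -> f0 G = f1 G.

Lemma spow_Delta_bound H N : f0 H ^+ N <= (N.+1 ^ #|H|)%:R * f1 H ^+ N + 1.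
Proof.
rewrite -(Delta_spow _ f0_Delta) -(Delta_spow _ f1_Delta).
apply: le_trans (Delta_mono f0_Delta (spow_coh_le_type_classes H N)) _.
rewrite !Delta_type_classes // lerD2r big_enum /=.
apply: le_trans (_ : _ <= \sum_(t in {ffun H -> 'I_N.+1}) f1 (spow H N)) _.
  apply: ler_sum => t _; rewrite agree_vt; last exact: type_class_vertex_transitive.
  exact/(Delta_mono f1_Delta)/induced_coh_le.
by rewrite (sumr_const (mem {ffun H -> 'I_N.+1})) card_ffun !card_ord mulr_natl.
Qed.

Lemma Delta_le_of_agree H : 1 <= f1 H -> f0 H <= f1 H.
Proof.
move=> f1H_ge1.
apply: (le_of_expr_le_poly (c := 2) (k := #|H|)); rewrite ?Delta_ge0 // => N.
have := spow_Delta_bound H N; rewrite natrX.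
have : 1 <= N.+1%:R ^+ #|H| * f1 H ^+ N.
  by rewrite mulr_ege1 ?exprn_ege1 ?ler1n.
lra.
Qed.

End Agreement.

Theorem lemma10 (R : realType) (f0 f1 : graph -> R) :
  in_Delta f0 -> in_Delta f1 -> f0 <> f1 ->
  exists G : graph, vertex_transitive G /\ f0 G <> f1 G.
Proof.
move=> f0_Delta f1_Delta neq_f; apply: NNPP => no_witness.
have agree_vt G : vertex_transitive G -> f0 G = f1 G.
  by move=> vt_G; apply: NNPP => neq_G; apply: no_witness; exists G.
apply/neq_f/functional_extensionality => H.
pose H1 := dunion H (E_graph 1).
have ge1 f : in_Delta f -> 1 <= f H1.
  by move=> f_Delta; rewrite Delta_dunion // Delta_E // lerDr Delta_ge0.
have : f0 H1 = f1 H1.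
  apply/le_anti/andP; split; apply: Delta_le_of_agree; rewrite ?ge1 //.
  by move=> G vt_G; rewrite agree_vt.
by rewrite !Delta_dunion // !Delta_E // => /addIr.
Qed.
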